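(* Let $\rho\in\mathbb R$, let $\mathbf a=(a_{m,n})$ be a complex matrix and let $\kappa_{\mathbf a}:\mathbb H_\rho\times\mathbb H_\rho\to\mathbb C$ be a positive semi-definite Dirichlet series kernel with coefficient matrix $\mathbf a$. Then $\kappa_{\mathbf a}$ is translation-invariant, i.e. $\kappa_{\mathbf a}(s-ib,u-ib)=\kappa_{\mathbf a}(s,u)$ for all $b\in\mathbb R$ and $s,u\in\mathbb H_\rho$, if and only if $\mathbf a$ is a diagonal matrix.
   Context: $\mathbb H_\rho=\{\Re s>\rho\}$. $\kappa_{\mathbf a}(s,u)=\sum_{m,n\ge1}a_{m,n}m^{-s}n^{-\bar u}$ is a Dirichlet series kernel on $\mathbb H_\rho$ if $(s,u)\mapsto\kappa_{\mathbf a}(s,\bar u)$ is regularly convergent on $\mathbb H_\rho\times\mathbb H_\rho$ (regular convergence of $\sum c_{m,n}m^{-s}n^{-u}$ at $(s_0,u_0)$: the double series converges there and every series $\sum_m c_{m,n}m^{-s_0}$ and $\sum_n c_{m,n}n^{-u_0}$ converges). Positive semi-definite: every finite matrix $(\kappa_{\mathbf a}(s_i,s_j))$ is positive semi-definite. *)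

From Stdlib Require Import Reals.
From Coquelicot Require Import Coquelicot.
Open Scope R_scope.

(* n^{-s} = exp(-s ln n) for a natural number n >= 1 and complex s. *)
Definition npow_neg (n : nat) (s : C) : C :=
  (exp (- Re s * ln (INR n)) * cos (Im s * ln (INR n)),
   - (exp (- Re s * ln (INR n)) * sin (Im s * ln (INR n)))).

Definition in_H (rho : R) (s : C) : Prop := rho < Re s.

Definition dterm (c : nat -> nat -> C) (s u : C) (m n : nat) : C :=
  Cmult (Cmult (c m n) (npow_neg m s)) (npow_neg n u).

(* Rectangular partial sums over 1 <= m <= M+1, 1 <= n <= N+1. *)
Definition dpartial (c : nat -> nat -> C) (s u : C) (M N : nat) : C :=
  sum_n (fun i => sum_n (fun j => dterm c s u (S i) (S j)) N) M.

(* Convergence (Pringsheim sense) of the double series to l: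
   the rectangular partial sums S_{M,N} tend to l as M, N -> oo jointly. *)
Definition dseries_conv_to (c : nat -> nat -> C) (s u : C) (l : C) : Prop :=
  filterlim (fun p : nat * nat => dpartial c s u (fst p) (snd p))
    (filter_prod eventually eventually) (locally l).

Definition regularly_convergent_at (c : nat -> nat -> C) (s0 u0 : C) : Prop :=
  (exists l, dseries_conv_to c s0 u0 l) /\
  (forall n, (1 <= n)%nat -> ex_series (fun i => dterm c s0 u0 (S i) n)) /\
  (forall m, (1 <= m)%nat -> ex_series (fun j => dterm c s0 u0 m (S j))).

(* kappa_a is a Dirichlet series kernel on H_rho: (s,u) |-> kappa_a(s, conj u)
   = sum a_{m,n} m^{-s} n^{-u} is regularly convergent on H_rho x H_rho. *)
Definition dirichlet_series_kernel (rho : R) (a : nat -> nat -> C) : Prop :=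
  forall s u, in_H rho s -> in_H rho u -> regularly_convergent_at a s u.

Definition is_kernel_of (rho : R) (a : nat -> nat -> C) (K : C -> C -> C) : Prop :=
  forall s u, in_H rho s -> in_H rho u -> dseries_conv_to a s (Cconj u) (K s u).

Definition psd_kernel (rho : R) (K : C -> C -> C) : Prop :=
  forall (k : nat) (pts x : nat -> C),
    (forall i, (i <= k)%nat -> in_H rho (pts i)) ->
    let q := sum_n (fun i => sum_n (fun j =>
               Cmult (Cmult (Cconj (x i)) (K (pts i) (pts j))) (x j)) k) k in
    Im q = 0 /\ 0 <= Re q.

Definition translation_invariant (rho : R) (K : C -> C -> C) : Prop :=
  forall (b : R) s u, in_H rho s -> in_H rho u ->
    K (Cminus s (0, b)) (Cminus u (0, b)) = K s u.

Definition diagonal (a : nat -> nat -> C) : Prop :=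
  forall m n, (1 <= m)%nat -> (1 <= n)%nat -> m <> n -> a m n = 0%C.

(* Diagonal coefficients make every term of the series invariant under
   (s, u) |-> (s - ib, u - ib), hence so is the kernel.  Conversely, for real
   x, y > rho, translation invariance says that the double Dirichlet series with
   coefficients a_{mn} ((n/m)^{it} - 1) sums to kappa(x + it, y + it) - kappa(x, y) = 0.
   Regular convergence at a single point bounds |a_{mn}| by B m^k n^k, and a double
   Dirichlet series with such coefficients that vanishes at all large integer points
   (X, Y) has only zero coefficients: if every coefficient lexicographically before
   (p, q) vanishes, multiplying the partial sums by p^X q^Y leaves c_{pq} plus a
   remainder of order (q/(q+1))^Y + q^Y (p/(p+1))^X, which is small once Y and then X
   are large.  For m <> n, choosing t with (n/m)^{it} = -1 gives a_{mn} = 0. *)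

From Stdlib Require Import Reals Lra Lia Wf_nat.
From Coquelicot Require Import Coquelicot.

Lemma npow_neg_add (n : nat) (z w : C) :
  npow_neg n (z + w) = (npow_neg n z * npow_neg n w)%C.
Proof.
  unfold npow_neg, Cmult, Re, Im; simpl.
  replace (- (fst z + fst w) * ln (INR n))
    with (- fst z * ln (INR n) + - fst w * ln (INR n)) by ring.
  rewrite Rmult_plus_distr_r, exp_plus, cos_plus, sin_plus.
  apply injective_projections; simpl; ring.
Qed.

Lemma Cmod_npow_neg (n : nat) (z : C) :
  Cmod (npow_neg n z) = exp (- Re z * ln (INR n)).
Proof.
  unfold npow_neg, Cmod; simpl.
  set (e := exp _); set (th := Im z * ln (INR n)).
  replace (_ + _) with (e ^ 2 * ((sin th)² + (cos th)²)) by (unfold Rsqr; ring).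
  rewrite sin2_cos2, Rmult_1_r. apply sqrt_pow2. left; apply exp_pos.
Qed.

Lemma npow_neg_nat (n X : nat) : (1 <= n)%nat ->
  npow_neg n (INR X, 0) = RtoC (/ INR n ^ X).
Proof.
  intros Hn. assert (0 < INR n) by (apply lt_0_INR; lia).
  unfold npow_neg, RtoC; simpl.
  rewrite Rmult_0_l, cos_0, sin_0, <- Rpower_pow, <- Rpower_Ropp by lra.
  unfold Rpower. f_equal; ring.
Qed.

Lemma dterm_nat_point c (X Y m n : nat) : (1 <= m)%nat -> (1 <= n)%nat ->
  dterm c (INR X, 0) (INR Y, 0) m n = Cmult (c m n) (RtoC (/ INR m ^ X * / INR n ^ Y)).
Proof.
  intros Hm Hn. unfold dterm. rewrite !npow_neg_nat by assumption.
  rewrite <- Cmult_assoc. f_equal. unfold Cmult, RtoC; simpl.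
  apply injective_projections; simpl; ring.
Qed.

Definition imag_twist (t : R) (m n : nat) : C :=
  Cmult (npow_neg m (0, t)) (npow_neg n (0, - t)).

Lemma Cmod_imag_twist t m n : Cmod (imag_twist t m n) = 1.
Proof.
  unfold imag_twist. rewrite Cmod_mult, !Cmod_npow_neg; simpl.
  rewrite !Ropp_0, !Rmult_0_l, exp_0. ring.
Qed.

Lemma imag_twist_neg1 m n : (1 <= m)%nat -> (1 <= n)%nat -> m <> n ->
  exists t, imag_twist t m n = RtoC (-1).
Proof.
  intros Hm Hn Hmn.
  assert (Hl : ln (INR n) - ln (INR m) <> 0).
  { intro E. apply Hmn, INR_eq, ln_inv; try (apply lt_0_INR; lia). lra. }
  exists (PI / (ln (INR n) - ln (INR m))).
  unfold imag_twist, npow_neg, Cmult, RtoC; simpl.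
  rewrite !Ropp_0, !Rmult_0_l, exp_0, !Rmult_1_l, <- Ropp_mult_distr_l, cos_neg, sin_neg.
  set (t := PI / _).
  replace (t * ln (INR n)) with (t * ln (INR m) + PI) by (unfold t; field; exact Hl).
  rewrite cos_plus, sin_plus, cos_PI, sin_PI.
  apply injective_projections; simpl; ring_simplify.
  - rewrite <- (sin2_cos2 (t * ln (INR m))). unfold Rsqr. ring.
  - ring.
Qed.

Lemma sum_n_Cminus (u v : nat -> C) N :
  sum_n (fun i => Cminus (u i) (v i)) N = Cminus (sum_n u N) (sum_n v N).
Proof.
  induction N as [|N IH].
  - now rewrite !sum_O.
  - rewrite !sum_Sn, IH. change ((sum_n u N - sum_n v N) + (u (S N) - v (S N)) =
      (sum_n u N + u (S N)) - (sum_n v N + v (S N)))%C. ring.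
Qed.

Lemma sum_n_le_loc (a b : nat -> R) N :
  (forall i, (i <= N)%nat -> a i <= b i) -> sum_n a N <= sum_n b N.
Proof. rewrite !sum_n_Reals. apply sum_Rle. Qed.

Lemma sum_n_ge_term (a : nat -> R) i0 N :
  (i0 <= N)%nat -> (forall i, 0 <= a i) -> a i0 <= sum_n a N.
Proof.
  intros Hi Ha. rewrite sum_n_Reals. induction N as [|N IH]; simpl.
  - replace i0 with 0%nat by lia. lra.
  - destruct (Nat.eq_dec i0 (S N)) as [->|Hne].
    + pose proof (cond_pos_sum a N Ha). lra.
    + pose proof (IH ltac:(lia)). pose proof (Ha (S N)). lra.
Qed.

Lemma Cmod_sum_n_le (g : nat -> C) N :
  Cmod (sum_n g N) <= sum_n (fun i => Cmod (g i)) N.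
Proof. exact (norm_sum_n_m g 0 N). Qed.

Lemma Cmod_sum_n_sub_le (g : nat -> C) (h : nat -> R) i0 N :
  (i0 <= N)%nat -> (forall i, i <> i0 -> Cmod (g i) <= h i) -> 0 <= h i0 ->
  Cmod (sum_n g N - g i0)%C <= sum_n h N.
Proof.
  intros Hi Hgh Hh0. induction N as [|N IH].
  - assert (i0 = 0%nat) as -> by lia. rewrite !sum_O.
    replace (g 0%nat - g 0%nat)%C with (RtoC 0) by ring. rewrite Cmod_0. exact Hh0.
  - rewrite !sum_Sn.
    change (Cmod (Cplus (sum_n g N) (g (S N)) - g i0)%C <= sum_n h N + h (S N)).
    destruct (Nat.eq_dec i0 (S N)) as [->|Hne].
    + assert (E : (sum_n g N + g (S N) - g (S N))%C = sum_n g N :> C) by ring.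
      rewrite E.
      eapply Rle_trans; [apply Cmod_sum_n_le|].
      apply Rle_trans with (sum_n h N); [|lra].
      apply sum_n_le_loc. intros i Hi'. apply Hgh. lia.
    + replace (sum_n g N + g (S N) - g i0)%C with ((sum_n g N - g i0) + g (S N))%C by ring.
      eapply Rle_trans; [apply Cmod_triangle|].
      apply Rplus_le_compat; [apply IH; lia | apply Hgh; lia].
Qed.

Lemma Cmod_le_double_sum_point (g : nat -> nat -> C) (h : nat -> nat -> R) i0 j0 M N :
  (i0 <= M)%nat -> (j0 <= N)%nat ->
  (forall i j, (i, j) <> (i0, j0) -> Cmod (g i j) <= h i j) ->
  (forall i j, 0 <= h i j) ->
  Cmod (g i0 j0) <=
  Cmod (sum_n (fun i => sum_n (g i) N) M) + 2 * sum_n (fun i => sum_n (h i) N) M.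
Proof.
  intros Hi Hj Hgh Hh.
  assert (Hrow : forall i, 0 <= sum_n (h i) N).
  { intro i. rewrite sum_n_Reals. apply cond_pos_sum, Hh. }
  assert (Hrows : Cmod (sum_n (fun i => sum_n (g i) N) M - sum_n (g i0) N)%C
                  <= sum_n (fun i => sum_n (h i) N) M).
  { apply (Cmod_sum_n_sub_le (fun i => sum_n (g i) N)); [exact Hi | | apply Hrow].
    intros i Hne. eapply Rle_trans; [apply Cmod_sum_n_le|].
    apply sum_n_le_loc. intros j _. apply Hgh. congruence. }
  assert (Hcol : Cmod (sum_n (g i0) N - g i0 j0)%C <= sum_n (h i0) N).
  { apply Cmod_sum_n_sub_le; [exact Hj | | apply Hh].
    intros j Hne. apply Hgh. congruence. }
  pose proof (sum_n_ge_term (fun i => sum_n (h i) N) i0 M Hi Hrow) as Hi0.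
  set (total := sum_n (fun i => sum_n (g i) N) M) in *.
  replace (g i0 j0)
    with (total - (total - sum_n (g i0) N) - (sum_n (g i0) N - g i0 j0))%C by ring.
  pose proof (Cmod_triangle (total - (total - sum_n (g i0) N)) (- (sum_n (g i0) N - g i0 j0))).
  pose proof (Cmod_triangle total (- (total - sum_n (g i0) N))).
  unfold Cminus in *. rewrite !Cmod_opp in *. lra.
Qed.

Lemma sum_inv_sq_le_2 N : sum_n (fun i => / INR (S i) ^ 2) N <= 2.
Proof.
  enough (H : sum_n (fun i => / INR (S i) ^ 2) N <= 2 - / INR (S N)).
  { pose proof (Rinv_0_lt_compat (INR (S N)) (lt_0_INR _ (Nat.lt_0_succ N))). lra. }
  induction N as [|N IH].
  - rewrite sum_O. simpl. lra.
  - rewrite sum_Sn. change (sum_n (fun i => / INR (S i) ^ 2) N + / INR (S (S N)) ^ 2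
                            <= 2 - / INR (S (S N))).
    rewrite (S_INR (S N)) in *. set (x := INR (S N)) in *.
    assert (Hx : 1 <= x) by (unfold x; apply (le_INR 1); lia).
    assert (/ (x + 1) ^ 2 <= / x - / (x + 1)).
    { replace (/ x - / (x + 1)) with (/ (x * (x + 1))) by (field; lra).
      apply Rinv_le_contravar; nra. }
    lra.
Qed.

Lemma nat_div_succ_bounds (n : nat) : 0 <= INR n / INR (n + 1) < 1.
Proof.
  rewrite plus_INR. simpl. pose proof (pos_INR n).
  split.
  - apply Rmult_le_pos; [lra | left; apply Rinv_0_lt_compat; lra].
  - apply Rmult_lt_reg_r with (INR n + 1); [lra|].
    unfold Rdiv. rewrite Rmult_assoc, Rinv_l by lra. lra.
Qed.

Lemma pow_ratio_le (x L b : R) (k W : nat) : 0 <= b -> 1 <= L <= x ->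
  x ^ k * (b / x) ^ (W + k + 2) <= b ^ (k + 2) * (b / L) ^ W / x ^ 2.
Proof.
  intros Hb [HL Hx].
  replace (x ^ k * (b / x) ^ (W + k + 2)) with (b ^ (k + 2) * (b / x) ^ W / x ^ 2).
  2:{ unfold Rdiv. rewrite !pow_add, !Rpow_mult_distr, !pow_inv.
      field; repeat split; try apply pow_nonzero; lra. }
  unfold Rdiv. apply Rmult_le_compat_r; [left; apply Rinv_0_lt_compat, pow_lt; lra|].
  apply Rmult_le_compat_l; [apply pow_le; lra|]. apply pow_incr. split.
  - apply Rmult_le_pos; [lra | left; apply Rinv_0_lt_compat; lra].
  - apply Rmult_le_compat_l; [lra|]. apply Rinv_le_contravar; lra.
Qed.

Lemma pow_lt_1_le_eps (A r eps : R) : 0 <= r < 1 -> 0 < eps ->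
  exists W : nat, A * r ^ W <= eps.
Proof.
  intros Hr He.
  pose proof (Rabs_pos A).
  assert (Hy : 0 < eps / (Rabs A + 1)) by (apply Rdiv_lt_0_compat; lra).
  destruct (pow_lt_1_zero r ltac:(rewrite Rabs_pos_eq; lra) _ Hy) as [W HW].
  exists W. specialize (HW W (le_n _)). rewrite Rabs_pos_eq in HW by (apply pow_le; lra).
  pose proof (Rle_abs A). pose proof (pow_le r W (proj1 Hr)).
  apply Rmult_lt_compat_l with (r := Rabs A + 1) in HW; [|lra].
  replace ((Rabs A + 1) * (eps / (Rabs A + 1))) with eps in HW by (field; lra).
  nra.
Qed.

Lemma dpartial_ext c s u c' s' u' M N :
  (forall m n, (1 <= m)%nat -> (1 <= n)%nat -> dterm c s u m n = dterm c' s' u' m n) ->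
  dpartial c s u M N = dpartial c' s' u' M N.
Proof.
  intros H. unfold dpartial.
  apply sum_n_ext; intro i. apply sum_n_ext; intro j. apply H; lia.
Qed.

Lemma dseries_conv_to_unique c s u l l' :
  dseries_conv_to c s u l -> dseries_conv_to c s u l' -> l = l'.
Proof. exact (filterlim_locally_unique _ l l'). Qed.

Lemma dseries_conv_to_sub c s u c1 s1 u1 c2 s2 u2 l1 l2 :
  (forall m n, (1 <= m)%nat -> (1 <= n)%nat ->
     dterm c s u m n = Cminus (dterm c1 s1 u1 m n) (dterm c2 s2 u2 m n)) ->
  dseries_conv_to c1 s1 u1 l1 -> dseries_conv_to c2 s2 u2 l2 ->
  dseries_conv_to c s u (Cminus l1 l2).
Proof.
  intros Hterm H1 H2. unfold dseries_conv_to.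
  apply (filterlim_ext
    (fun p => plus (dpartial c1 s1 u1 (fst p) (snd p)) (opp (dpartial c2 s2 u2 (fst p) (snd p))))).
  { intros [M N].
    change (Cminus (dpartial c1 s1 u1 M N) (dpartial c2 s2 u2 M N) = dpartial c s u M N).
    unfold dpartial. rewrite <- sum_n_Cminus.
    apply sum_n_ext; intro i. rewrite <- sum_n_Cminus.
    apply sum_n_ext; intro j. symmetry. apply Hterm; lia. }
  eapply filterlim_comp_2; [exact H1 | | exact (filterlim_plus (V := C_NormedModule) l1 (opp l2))].
  eapply filterlim_comp; [exact H2 | exact (filterlim_opp (V := C_NormedModule) l2)].
Qed.

Lemma dseries_conv_to_eventually c s u l eps : dseries_conv_to c s u l -> 0 < eps ->
  exists N0, forall M N, (N0 <= M)%nat -> (N0 <= N)%nat ->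
    Cmod (Cminus (dpartial c s u M N) l) < eps.
Proof.
  intros H He.
  destruct (proj1 (filterlim_locally_ball_norm _ _) H (mkposreal eps He))
    as [P Q [N1 HP] [N2 HQ] HPQ].
  exists (max N1 N2). intros M N HM HN.
  exact (HPQ M N (HP M ltac:(lia)) (HQ N ltac:(lia))).
Qed.

Lemma dterm_as_dpartial_diff c s u i j :
  dterm c s u (S (S i)) (S (S j)) =
  (dpartial c s u (S i) (S j) - dpartial c s u i (S j)
   - dpartial c s u (S i) j + dpartial c s u i j)%C.
Proof.
  unfold dpartial. rewrite !(sum_Sn _ i). rewrite (sum_Sn _ j).
  set (f := fun i0 j0 => dterm c s u (S i0) (S j0)).
  set (D := fun N => sum_n (fun i0 => sum_n (f i0) N) i).
  change (f (S i) (S j) = (D (S j) + (sum_n (f (S i)) j + f (S i) (S j))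
    - D (S j) - (D j + sum_n (f (S i)) j) + D j)%C).
  ring.
Qed.

Lemma dseries_conv_to_dterm_bounded c s u l : dseries_conv_to c s u l ->
  exists N0, forall i j, (N0 <= i)%nat -> (N0 <= j)%nat ->
    Cmod (dterm c s u (S i) (S j)) <= 4.
Proof.
  intros H. destruct (dseries_conv_to_eventually c s u l 1 H Rlt_0_1) as [N0 HN0].
  exists (S N0). intros [|i] [|j] Hi Hj; try lia.
  rewrite dterm_as_dpartial_diff.
  pose proof (HN0 (S i) (S j) ltac:(lia) ltac:(lia)).
  pose proof (HN0 i (S j) ltac:(lia) ltac:(lia)).
  pose proof (HN0 (S i) j ltac:(lia) ltac:(lia)).
  pose proof (HN0 i j ltac:(lia) ltac:(lia)).
  set (d := dpartial c s u) in *.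
  replace (d (S i) (S j) - d i (S j) - d (S i) j + d i j)%C with
    ((d (S i) (S j) - l) + - (d i (S j) - l) + - (d (S i) j - l) + (d i j - l))%C by ring.
  pose proof (Cmod_triangle (d (S i) (S j) - l + - (d i (S j) - l) + - (d (S i) j - l))
                (d i j - l)).
  pose proof (Cmod_triangle (d (S i) (S j) - l + - (d i (S j) - l)) (- (d (S i) j - l))).
  pose proof (Cmod_triangle (d (S i) (S j) - l) (- (d i (S j) - l))).
  rewrite !Cmod_opp in *. lra.
Qed.

Lemma bounded_of_eventually_bounded (f : nat -> R) N B0 :
  (forall j, (N <= j)%nat -> f j <= B0) -> exists B, forall j, f j <= B.
Proof.
  revert B0; induction N as [|N IH]; intros B0 H.
  - exists B0. intro j. apply H; lia.
  - apply (IH (Rmax B0 (f N))). intros j Hj.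
    destruct (Nat.eq_dec j N) as [->|Hne]; [apply Rmax_r|].
    eapply Rle_trans; [apply H; lia | apply Rmax_l].
Qed.

Lemma uniform_bound_first_rows (G : nat -> nat -> R) N :
  (forall i, (i < N)%nat -> exists B, forall j, G i j <= B) ->
  exists B, forall i j, (i < N)%nat -> G i j <= B.
Proof.
  induction N as [|N IH]; intros H.
  - exists 0. intros; lia.
  - destruct IH as [B1 HB1]; [intros i Hi; apply H; lia|].
    destruct (H N (Nat.lt_succ_diag_r N)) as [B2 HB2].
    exists (Rmax B1 B2). intros i j Hi.
    destruct (Nat.eq_dec i N) as [->|Hne].
    + eapply Rle_trans; [apply HB2 | apply Rmax_r].
    + eapply Rle_trans; [apply HB1; lia | apply Rmax_l].
Qed.

Lemma bounded_of_bounded_rows_cols (G : nat -> nat -> R) N0 B0 :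
  (forall i j, (N0 <= i)%nat -> (N0 <= j)%nat -> G i j <= B0) ->
  (forall i, exists B, forall j, G i j <= B) ->
  (forall j, exists B, forall i, G i j <= B) ->
  exists B, forall i j, G i j <= B.
Proof.
  intros Htail Hrows Hcols.
  destruct (uniform_bound_first_rows G N0) as [Br HBr]; [intros i _; apply Hrows|].
  destruct (uniform_bound_first_rows (fun j i => G i j) N0) as [Bc HBc];
    [intros j _; apply Hcols|].
  exists (Rmax B0 (Rmax Br Bc)). intros i j.
  destruct (Nat.lt_ge_cases i N0) as [Hi|Hi];
    [|destruct (Nat.lt_ge_cases j N0) as [Hj|Hj]].
  - eapply Rle_trans; [apply HBr, Hi|]. eapply Rle_trans; [apply Rmax_l | apply Rmax_r].
  - eapply Rle_trans; [apply (HBc j i Hj)|]. eapply Rle_trans; [apply Rmax_r | apply Rmax_r].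
  - eapply Rle_trans; [apply Htail; assumption | apply Rmax_l].
Qed.

Lemma ex_series_Cmod_bounded (u : nat -> C) :
  ex_series u -> exists B, forall j, Cmod (u j) <= B.
Proof.
  intros [l Hl].
  destruct (proj1 (filterlim_locally_ball_norm _ _) Hl (mkposreal 1 Rlt_0_1)) as [N HN].
  apply (bounded_of_eventually_bounded _ (S N) 2). intros [|j] Hj; [lia|].
  pose proof (HN (S j) ltac:(lia)) as H1. pose proof (HN j ltac:(lia)) as H0.
  unfold ball_norm in H1, H0. simpl in H1, H0. rewrite sum_Sn in H1.
  change (Cmod ((sum_n u j + u (S j)) - l) < 1)%C in H1.
  change (Cmod (sum_n u j - l) < 1)%C in H0.
  replace (u (S j)) with ((sum_n u j + u (S j) - l) - (sum_n u j - l))%C by ring.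
  unfold Cminus at 1. eapply Rle_trans; [apply Cmod_triangle|]. rewrite Cmod_opp. lra.
Qed.

Lemma regularly_convergent_dterm_bounded c s u : regularly_convergent_at c s u ->
  exists B, forall m n, (1 <= m)%nat -> (1 <= n)%nat -> Cmod (dterm c s u m n) <= B.
Proof.
  intros [[l Hl] [Hcols Hrows]].
  destruct (dseries_conv_to_dterm_bounded c s u l Hl) as [N0 HN0].
  destruct (bounded_of_bounded_rows_cols (fun i j => Cmod (dterm c s u (S i) (S j))) N0 4 HN0)
    as [B HB].
  - intro i. apply ex_series_Cmod_bounded, Hrows. lia.
  - intro j. apply ex_series_Cmod_bounded, Hcols. lia.
  - exists B. intros [|m] [|n] Hm Hn; try lia. apply HB.
Qed.

Lemma dirichlet_series_kernel_coef_growth rho a k :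
  dirichlet_series_kernel rho a -> rho < INR k ->
  exists B, forall m n, (1 <= m)%nat -> (1 <= n)%nat ->
    Cmod (a m n) <= B * INR m ^ k * INR n ^ k.
Proof.
  intros Hker Hk.
  assert (Hs0 : in_H rho (INR k, 0)) by exact Hk.
  destruct (regularly_convergent_dterm_bounded _ _ _ (Hker _ _ Hs0 Hs0)) as [B HB].
  exists B. intros m n Hm Hn.
  assert (Hmk : 0 < INR m ^ k) by (apply pow_lt, lt_0_INR; lia).
  assert (Hnk : 0 < INR n ^ k) by (apply pow_lt, lt_0_INR; lia).
  specialize (HB m n Hm Hn).
  rewrite dterm_nat_point, Cmod_mult, Cmod_R, Rabs_pos_eq in HB by (try assumption;
    left; apply Rmult_lt_0_compat; apply Rinv_0_lt_compat; assumption).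
  rewrite Rmult_assoc.
  replace (Cmod (a m n))
    with (Cmod (a m n) * (/ INR m ^ k * / INR n ^ k) * (INR m ^ k * INR n ^ k)) by (field; lra).
  apply Rmult_le_compat_r; [apply Rmult_le_pos|]; lra.
Qed.

Lemma double_sum_inv_sq_le (w : R) M N : 0 <= w ->
  sum_n (fun i => sum_n (fun j => w * / INR (S i) ^ 2 * / INR (S j) ^ 2) N) M <= 4 * w.
Proof.
  intros Hw. set (u := fun i => / INR (S i) ^ 2).
  rewrite (sum_n_ext _ (fun i => mult (w * u i) (sum_n u N)))
    by (intro i; rewrite <- (sum_n_mult_l (K := R_Ring)); reflexivity).
  rewrite (sum_n_mult_r (K := R_Ring)), (sum_n_mult_l (K := R_Ring)).
  change (w * sum_n u M * sum_n u N <= 4 * w).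
  assert (Hu : forall i, 0 <= u i)
    by (intro i; left; apply Rinv_0_lt_compat, pow_lt, lt_0_INR; lia).
  assert (0 <= sum_n u M) by (rewrite sum_n_Reals; apply cond_pos_sum, Hu).
  assert (sum_n u M <= 2) by apply sum_inv_sq_le_2.
  assert (0 <= sum_n u N) by (rewrite sum_n_Reals; apply cond_pos_sum, Hu).
  assert (sum_n u N <= 2) by apply sum_inv_sq_le_2.
  replace (4 * w) with (w * 2 * 2) by ring.
  apply Rmult_le_compat; [apply Rmult_le_pos; lra | lra | apply Rmult_le_compat_l; lra | lra].
Qed.

Lemma sum_n_scaled_dpartial c s u (lam : C) M N :
  sum_n (fun i => sum_n (fun j => Cmult lam (dterm c s u (S i) (S j))) N) M =
  Cmult lam (dpartial c s u M N).
Proof.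
  rewrite (sum_n_ext _ (fun i => mult lam (sum_n (fun j => dterm c s u (S i) (S j)) N)))
    by (intro i; rewrite <- (sum_n_mult_l (K := C_Ring)); reflexivity).
  apply (sum_n_mult_l (K := C_Ring)).
Qed.

Lemma Cmod_scaled_dterm_nat_point c (X Y m n : nat) (x y : R) :
  (1 <= m)%nat -> (1 <= n)%nat -> 0 <= x -> 0 <= y ->
  Cmod (Cmult (RtoC (x ^ X * y ^ Y)) (dterm c (INR X, 0) (INR Y, 0) m n)) =
  Cmod (c m n) * ((x / INR m) ^ X * (y / INR n) ^ Y).
Proof.
  intros Hm Hn Hx Hy.
  assert (0 < INR m ^ X) by (apply pow_lt, lt_0_INR; lia).
  assert (0 < INR n ^ Y) by (apply pow_lt, lt_0_INR; lia).
  rewrite dterm_nat_point, !Cmod_mult, !Cmod_R, !Rabs_pos_eq by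
    (try assumption; apply Rmult_le_pos; try apply pow_le; try assumption;
     left; apply Rinv_0_lt_compat; assumption).
  unfold Rdiv. rewrite !Rpow_mult_distr, !pow_inv. ring.
Qed.

Section DoubleDirichletUniqueness.

Variables (c : nat -> nat -> C) (B : R) (k : nat).

Hypothesis c_growth : forall m n, (1 <= m)%nat -> (1 <= n)%nat ->
  Cmod (c m n) <= B * INR m ^ k * INR n ^ k.

Hypothesis c_sum_zero : forall X Y : nat, (k <= X)%nat -> (k <= Y)%nat ->
  dseries_conv_to c (INR X, 0) (INR Y, 0) 0.

Lemma growth_const_ge0 : 0 <= B.
Proof.
  pose proof (c_growth 1 1 (le_n 1) (le_n 1)) as H. simpl INR in H.
  rewrite !pow1, !Rmult_1_r in H. pose proof (Cmod_ge_0 (c 1%nat 1%nat)). lra.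
Qed.

Lemma weighted_coef_le_growth m n (x y : R) X Y :
  (1 <= m)%nat -> (1 <= n)%nat -> 0 <= x -> 0 <= y ->
  Cmod (c m n) * ((x / INR m) ^ X * (y / INR n) ^ Y)
  <= B * (INR m ^ k * (x / INR m) ^ X) * (INR n ^ k * (y / INR n) ^ Y).
Proof.
  intros Hm Hn Hx Hy.
  assert (0 <= (x / INR m) ^ X * (y / INR n) ^ Y).
  { apply Rmult_le_pos; apply pow_le, Rmult_le_pos; try assumption;
      left; apply Rinv_0_lt_compat, lt_0_INR; lia. }
  replace (B * (INR m ^ k * (x / INR m) ^ X) * (INR n ^ k * (y / INR n) ^ Y))
    with (B * INR m ^ k * INR n ^ k * ((x / INR m) ^ X * (y / INR n) ^ Y)) by ring.
  apply Rmult_le_compat_r; [assumption | apply c_growth; assumption].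
Qed.

Lemma weighted_coef_le_same_row p q n WX WY : (1 <= p)%nat -> (q < n)%nat ->
  Cmod (c p n) * ((INR p / INR p) ^ (WX + k + 2) * (INR q / INR n) ^ (WY + k + 2))
  <= B * INR p ^ (k + 2) * (INR q ^ (k + 2) * (INR q / INR (q + 1)) ^ WY)
     * / INR p ^ 2 * / INR n ^ 2.
Proof.
  intros Hp Hqn.
  assert (HP : 1 <= INR p) by (apply (le_INR 1); lia).
  pose proof (le_INR (q + 1) n ltac:(lia)) as Hq1. rewrite plus_INR in Hq1. simpl in Hq1.
  pose proof (pos_INR q).
  eapply Rle_trans; [apply weighted_coef_le_growth; try lia; apply pos_INR|].
  rewrite Rdiv_diag, pow1, Rmult_1_r by lra.
  assert (E : B * INR p ^ (k + 2) * (INR q ^ (k + 2) * (INR q / INR (q + 1)) ^ WY)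
               * / INR p ^ 2 * / INR n ^ 2
             = B * INR p ^ k * (INR q ^ (k + 2) * (INR q / INR (q + 1)) ^ WY / INR n ^ 2)).
  { rewrite pow_add. field. split; lra. }
  rewrite E.
  apply Rmult_le_compat_l; [apply Rmult_le_pos; [apply growth_const_ge0 | apply pow_le; lra]|].
  apply pow_ratio_le; [assumption|]. rewrite plus_INR. simpl. lra.
Qed.

Lemma weighted_coef_le_later_row p q m n WX WY : (p < m)%nat -> (1 <= n)%nat ->
  Cmod (c m n) * ((INR p / INR m) ^ (WX + k + 2) * (INR q / INR n) ^ (WY + k + 2))
  <= B * (INR p ^ (k + 2) * (INR p / INR (p + 1)) ^ WX) * (INR q ^ (k + 2) * INR q ^ WY)
     * / INR m ^ 2 * / INR n ^ 2.
Proof.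
  intros Hpm Hn.
  pose proof (le_INR (p + 1) m ltac:(lia)) as Hp1. rewrite plus_INR in Hp1. simpl in Hp1.
  assert (HN : 1 <= INR n) by (apply (le_INR 1); lia).
  pose proof (pos_INR p). pose proof (pos_INR q). pose proof growth_const_ge0.
  eapply Rle_trans; [apply weighted_coef_le_growth; try lia; apply pos_INR|].
  set (Am := INR m ^ k * (INR p / INR m) ^ (WX + k + 2)).
  set (An := INR n ^ k * (INR q / INR n) ^ (WY + k + 2)).
  assert (HAm : Am <= INR p ^ (k + 2) * (INR p / INR (p + 1)) ^ WX / INR m ^ 2).
  { apply pow_ratio_le; [lra|]. rewrite plus_INR. simpl. lra. }
  assert (HAn : An <= INR q ^ (k + 2) * (INR q / 1) ^ WY / INR n ^ 2)
    by (apply pow_ratio_le; lra).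
  assert (0 <= Am).
  { apply Rmult_le_pos; apply pow_le; [lra|].
    apply Rmult_le_pos; [lra | left; apply Rinv_0_lt_compat; lra]. }
  assert (0 <= An).
  { apply Rmult_le_pos; apply pow_le; [lra|].
    apply Rmult_le_pos; [lra | left; apply Rinv_0_lt_compat; lra]. }
  rewrite Rdiv_1 in HAn. unfold Rdiv in HAm, HAn.
  replace (B * (INR p ^ (k + 2) * (INR p / INR (p + 1)) ^ WX) * (INR q ^ (k + 2) * INR q ^ WY)
           * / INR m ^ 2 * / INR n ^ 2)
    with (B * (INR p ^ (k + 2) * (INR p / INR (p + 1)) ^ WX * / INR m ^ 2)
            * (INR q ^ (k + 2) * INR q ^ WY * / INR n ^ 2)) by ring.
  apply Rmult_le_compat; [apply Rmult_le_pos; lra | lra | apply Rmult_le_compat_l; lra | lra].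
Qed.

Section LexStep.

Variables (p q : nat).
Hypotheses (Hp : (1 <= p)%nat) (Hq : (1 <= q)%nat).
Hypothesis c_lex_smaller_zero : forall m n, (1 <= m)%nat -> (1 <= n)%nat ->
  (m < p \/ (m = p /\ n < q))%nat -> c m n = 0.

Definition tail_weight (WX WY : nat) : R :=
  B * (INR p ^ (k + 2) * (INR q ^ (k + 2) * (INR q / INR (q + 1)) ^ WY)
       + INR p ^ (k + 2) * (INR p / INR (p + 1)) ^ WX * (INR q ^ (k + 2) * INR q ^ WY)).

Lemma tail_weight_ge0 WX WY : 0 <= tail_weight WX WY.
Proof.
  pose proof growth_const_ge0. pose proof (pos_INR p). pose proof (pos_INR q).
  pose proof (nat_div_succ_bounds p). pose proof (nat_div_succ_bounds q).
  unfold tail_weight. apply Rmult_le_pos; [assumption|].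
  apply Rplus_le_le_0_compat; repeat apply Rmult_le_pos; apply pow_le; lra.
Qed.

Lemma weighted_coef_le WX WY m n : (1 <= m)%nat -> (1 <= n)%nat -> (m, n) <> (p, q) ->
  Cmod (c m n) * ((INR p / INR m) ^ (WX + k + 2) * (INR q / INR n) ^ (WY + k + 2))
  <= tail_weight WX WY * / INR m ^ 2 * / INR n ^ 2.
Proof.
  intros Hm Hn Hmn.
  assert (Hinv : forall r : nat, (1 <= r)%nat -> 0 <= / INR r ^ 2)
    by (intros r Hr; left; apply Rinv_0_lt_compat, pow_lt, lt_0_INR; lia).
  pose proof (Hinv m Hm). pose proof (Hinv n Hn).
  pose proof growth_const_ge0. pose proof (pos_INR p). pose proof (pos_INR q).
  pose proof (nat_div_succ_bounds p). pose proof (nat_div_succ_bounds q).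
  set (S1 := INR p ^ (k + 2) * (INR q ^ (k + 2) * (INR q / INR (q + 1)) ^ WY)).
  set (S2 := INR p ^ (k + 2) * (INR p / INR (p + 1)) ^ WX * (INR q ^ (k + 2) * INR q ^ WY)).
  assert (0 <= B * S1 * / INR m ^ 2 * / INR n ^ 2)
    by (unfold S1; repeat apply Rmult_le_pos; try apply pow_le; lra).
  assert (0 <= B * S2 * / INR m ^ 2 * / INR n ^ 2)
    by (unfold S2; repeat apply Rmult_le_pos; try apply pow_le; lra).
  replace (tail_weight WX WY * / INR m ^ 2 * / INR n ^ 2)
    with (B * S1 * / INR m ^ 2 * / INR n ^ 2 + B * S2 * / INR m ^ 2 * / INR n ^ 2)
    by (unfold tail_weight; fold S1 S2; ring).
  destruct (Nat.lt_total m p) as [Hlt | [-> | Hgt]].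
  - rewrite c_lex_smaller_zero, Cmod_0, Rmult_0_l by lia. lra.
  - destruct (Nat.lt_total n q) as [Hlt | [-> | Hgt]].
    + rewrite c_lex_smaller_zero, Cmod_0, Rmult_0_l by lia. lra.
    + congruence.
    + pose proof (weighted_coef_le_same_row p q n WX WY Hp Hgt). unfold S1. lra.
  - pose proof (weighted_coef_le_later_row p q m n WX WY Hgt Hn). unfold S2. lra.
Qed.

Lemma Cmod_coef_le_tail_weight WX WY : Cmod (c p q) <= 8 * tail_weight WX WY.
Proof.
  set (X := (WX + k + 2)%nat). set (Y := (WY + k + 2)%nat).
  set (lam := INR p ^ X * INR q ^ Y).
  assert (Hlam : 0 < lam) by (apply Rmult_lt_0_compat; apply pow_lt, lt_0_INR; lia).
  set (g := fun i j => Cmult (RtoC lam) (dterm c (INR X, 0) (INR Y, 0) (S i) (S j))).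
  set (h := fun i j => tail_weight WX WY * / INR (S i) ^ 2 * / INR (S j) ^ 2).
  assert (Hg : forall i j, Cmod (g i j) =
            Cmod (c (S i) (S j)) * ((INR p / INR (S i)) ^ X * (INR q / INR (S j)) ^ Y))
    by (intros i j; apply Cmod_scaled_dterm_nat_point; try lia; apply pos_INR).
  assert (Hgh : forall i j, (i, j) <> (p - 1, q - 1)%nat -> Cmod (g i j) <= h i j).
  { intros i j Hij. rewrite Hg. apply weighted_coef_le; try lia.
    intro E. apply Hij. injection E as E1 E2. f_equal; lia. }
  assert (Hh : forall i j, 0 <= h i j).
  { intros i j. pose proof (tail_weight_ge0 WX WY).
    unfold h. apply Rmult_le_pos; [apply Rmult_le_pos; [assumption|]|];
      left; apply Rinv_0_lt_compat, pow_lt, lt_0_INR; lia. }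
  apply Rle_plus_epsilon. intros eps He.
  destruct (dseries_conv_to_eventually c (INR X, 0) (INR Y, 0) 0 (eps / lam)
              (c_sum_zero X Y ltac:(lia) ltac:(lia)) ltac:(apply Rdiv_lt_0_compat; lra))
    as [N0 HN0].
  set (M := max N0 (p - 1)). set (N := max N0 (q - 1)).
  specialize (HN0 M N ltac:(lia) ltac:(lia)).
  replace (Cminus (dpartial c (INR X, 0) (INR Y, 0) M N) 0)
    with (dpartial c (INR X, 0) (INR Y, 0) M N) in HN0 by ring.
  pose proof (Cmod_le_double_sum_point g h (p - 1) (q - 1) M N ltac:(lia) ltac:(lia) Hgh Hh)
    as Hpoint.
  unfold g in Hpoint at 2. rewrite sum_n_scaled_dpartial, Cmod_mult, Cmod_R in Hpoint.
  rewrite Rabs_pos_eq in Hpoint by lra.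
  rewrite Hg in Hpoint. replace (S (p - 1)) with p in Hpoint by lia.
  replace (S (q - 1)) with q in Hpoint by lia.
  rewrite !Rdiv_diag, !pow1, !Rmult_1_r in Hpoint by (apply not_0_INR; lia).
  pose proof (double_sum_inv_sq_le (tail_weight WX WY) M N (tail_weight_ge0 WX WY)).
  apply Rmult_lt_compat_l with (r := lam) in HN0; [|lra].
  replace (lam * (eps / lam)) with eps in HN0 by (field; lra).
  unfold h in Hpoint. lra.
Qed.

Lemma coef_eq_0_of_lex_smaller_eq_0 : c p q = 0.
Proof.
  apply Cmod_eq_0, Rle_antisym; [|apply Cmod_ge_0].
  apply Rle_plus_epsilon. intros eps He. rewrite Rplus_0_l.
  set (A := 8 * B * INR p ^ (k + 2) * INR q ^ (k + 2)).
  destruct (pow_lt_1_le_eps A _ (eps / 2) (nat_div_succ_bounds q) ltac:(lra)) as [WY HWY].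
  destruct (pow_lt_1_le_eps (A * INR q ^ WY) _ (eps / 2) (nat_div_succ_bounds p) ltac:(lra))
    as [WX HWX].
  eapply Rle_trans; [apply (Cmod_coef_le_tail_weight WX WY)|].
  replace (8 * tail_weight WX WY) with (A * (INR q / INR (q + 1)) ^ WY
      + A * INR q ^ WY * (INR p / INR (p + 1)) ^ WX) by (unfold tail_weight, A; ring).
  lra.
Qed.

End LexStep.

Lemma double_dirichlet_coef_eq_0 m n : (1 <= m)%nat -> (1 <= n)%nat -> c m n = 0.
Proof.
  revert n. induction m as [m IHm] using lt_wf_ind.
  intro n. induction n as [n IHn] using lt_wf_ind.
  intros Hm Hn. apply (coef_eq_0_of_lex_smaller_eq_0 m n Hm Hn).
  intros m' n' Hm' Hn' [Hlt | [-> Hlt]]; [apply IHm | apply IHn]; assumption.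
Qed.

End DoubleDirichletUniqueness.

Lemma diagonal_translation_invariant rho a K :
  is_kernel_of rho a K -> diagonal a -> translation_invariant rho K.
Proof.
  intros HK Hdiag b s u Hs Hu.
  assert (Hshift : forall z, in_H rho z -> in_H rho (Cminus z (0, b))).
  { intros z Hz. unfold in_H, Re in *. simpl. lra. }
  apply (dseries_conv_to_unique a (Cminus s (0, b)) (Cconj (Cminus u (0, b))));
    [apply HK; apply Hshift; assumption|].
  unfold dseries_conv_to. eapply filterlim_ext; [|exact (HK s u Hs Hu)].
  intros [M N]. apply dpartial_ext. intros m n Hm Hn.
  destruct (Nat.eq_dec m n) as [<-|Hmn].
  - unfold dterm. rewrite <- !Cmult_assoc, <- !npow_neg_add. do 2 f_equal.
    apply injective_projections; simpl; ring.
  - unfold dterm. rewrite Hdiag by assumption. rewrite !Cmult_0_l. reflexivity.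
Qed.

Definition twisted_diff (a : nat -> nat -> C) (t : R) (m n : nat) : C :=
  Cmult (a m n) (Cminus (imag_twist t m n) 1).

Lemma twisted_diff_growth a B k t :
  (forall m n, (1 <= m)%nat -> (1 <= n)%nat -> Cmod (a m n) <= B * INR m ^ k * INR n ^ k) ->
  forall m n, (1 <= m)%nat -> (1 <= n)%nat ->
    Cmod (twisted_diff a t m n) <= 2 * B * INR m ^ k * INR n ^ k.
Proof.
  intros Ha m n Hm Hn. unfold twisted_diff, Cminus.
  rewrite Cmod_mult. specialize (Ha m n Hm Hn).
  pose proof (Cmod_triangle (imag_twist t m n) (Copp 1)) as Htri.
  rewrite Cmod_opp, Cmod_1, Cmod_imag_twist in Htri.
  pose proof (Cmod_ge_0 (a m n)).
  nra.
Qed.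

Lemma twisted_diff_sum_zero rho a K t (x y : R) :
  is_kernel_of rho a K -> translation_invariant rho K -> rho < x -> rho < y ->
  dseries_conv_to (twisted_diff a t) (x, 0) (y, 0) 0.
Proof.
  intros HK HT Hx Hy.
  assert (Hxt : in_H rho (x, t)) by exact Hx. assert (Hyt : in_H rho (y, t)) by exact Hy.
  assert (Hx0 : in_H rho (x, 0)) by exact Hx. assert (Hy0 : in_H rho (y, 0)) by exact Hy.
  replace (RtoC 0) with (Cminus (K (x, t) (y, t)) (K (x, 0) (y, 0))).
  2:{ pose proof (HT t _ _ Hxt Hyt) as E.
      replace (Cminus (x, t) (0, t)) with ((x, 0) : C) in E
        by (apply injective_projections; simpl; ring).
      replace (Cminus (y, t) (0, t)) with ((y, 0) : C) in E
        by (apply injective_projections; simpl; ring).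
      rewrite E. ring. }
  eapply dseries_conv_to_sub; [| exact (HK _ _ Hxt Hyt) | exact (HK _ _ Hx0 Hy0)].
  intros m n _ _. unfold dterm, twisted_diff, imag_twist, Cconj. simpl.
  replace ((x, t) : C) with (Cplus (x, 0) (0, t)) by (apply injective_projections; simpl; ring).
  replace ((y, - t) : C) with (Cplus (y, 0) (0, - t)) by (apply injective_projections; simpl; ring).
  replace ((y, - 0) : C) with ((y, 0) : C) by (apply injective_projections; simpl; ring).
  rewrite !npow_neg_add. ring.
Qed.

Lemma coef_eq_0_of_twisted_diff_eq_0 a t m n :
  imag_twist t m n = RtoC (-1) -> twisted_diff a t m n = 0 -> a m n = 0.
Proof.
  intros Ht Hzero. unfold twisted_diff in Hzero. rewrite Ht in Hzero.
  replace (Cminus (RtoC (-1)) 1) with (RtoC (-2)) in Hzero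
    by (apply injective_projections; simpl; ring).
  apply (f_equal Cmod) in Hzero. rewrite Cmod_mult, Cmod_R, Cmod_0, Rabs_left in Hzero by lra.
  apply Cmod_eq_0. lra.
Qed.

Theorem proposition5p1 (rho : R) (a : nat -> nat -> C) (K : C -> C -> C) :
  dirichlet_series_kernel rho a ->
  is_kernel_of rho a K ->
  psd_kernel rho K ->
  (translation_invariant rho K <-> diagonal a).
Proof.
  intros Hker HK _. split; [|apply diagonal_translation_invariant; exact HK].
  intros HT m n Hm Hn Hmn.
  destruct (INR_unbounded rho) as [k Hk].
  destruct (dirichlet_series_kernel_coef_growth rho a k Hker Hk) as [B HB].
  destruct (imag_twist_neg1 m n Hm Hn Hmn) as [t Ht].
  assert (Hrho : forall X, (k <= X)%nat -> rho < INR X)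
    by (intros X HX; apply Rlt_le_trans with (INR k); [lra | apply le_INR; lia]).
  apply (coef_eq_0_of_twisted_diff_eq_0 a t m n Ht).
  apply (double_dirichlet_coef_eq_0 _ (2 * B) k); try assumption.
  - exact (twisted_diff_growth a B k t HB).
  - intros X Y HX HY. apply (twisted_diff_sum_zero rho a K); auto.
Qed.
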